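(* Let $A\subset\mathbb{R}$, let $f_1,f_2:A\to\mathbb{R}$ be functions and let $a,\lambda,L_1,L_2\in\mathbb{R}$. Suppose $T_5\lim_{x\to a}f_1(x)=L_1$ and $T_5\lim_{x\to a}f_2(x)=L_2$. Then: 1. $T_5\lim_{x\to a}\left(f_1(x)+f_2(x)\right)=L_1+L_2$; 2. $T_5\lim_{x\to a}\left(f_1(x)f_2(x)\right)=L_1L_2$; 3. if $L_2\neq0$, then $T_5\lim_{x\to a}\frac{f_1(x)}{f_2(x)}=\frac{L_1}{L_2}$, where $f_1/f_2$ is considered on the set $\{x\in A: f_2(x)\neq0\}$; 4. $T_5\lim_{x\to a}\left(\lambda f_1(x)\right)=\lambda L_1$.
   Context: For $B\subset\mathbb{R}$, $f:B\to\mathbb{R}$ and $a,L\in\mathbb{R}$, $T_5\lim_{x\to a}f(x)=L$ means: for every real $\varepsilon>0$ there exists a real $\delta_\varepsilon>0$ such that the set $\left\{x\in\left((a-\delta_{\varepsilon},a+\delta_{\varepsilon})\setminus\{a\}\right)\cap B:\ |f(x)-L|\geq\varepsilon\right\}$ is countable (finite or countably infinite). *)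

From HB Require Import structures.
From mathcomp Require Import all_boot all_order all_algebra.
From mathcomp Require Import all_classical all_reals.
Set Implicit Arguments. Unset Strict Implicit. Unset Printing Implicit Defensive.
Import Order.TTheory GRing.Theory Num.Theory.
Local Open Scope classical_set_scope.
Local Open Scope ring_scope.

Definition T5lim (R : realType) (B : set R) (f : R -> R) (a L : R) : Prop :=
  forall eps : R, 0 < eps ->
    exists2 d : R, 0 < d &
      countable [set x | [/\ x \in `]a - d, a + d[, x != a, B x &
                             eps <= `|f x - L|]].

(* T5lim B f a L says exactly that f tends to L along [within B F], where F is
   the filter of sets containing all but countably many points of some
   punctured interval around a.  Countable sets are closed under finite unions,
   so F is a filter and the limit laws for sums, products, inverses and
   constants hold along it as along any filter; shrinking B to the points where
   f2 does not vanish only refines the filter. *)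
From HB Require Import structures.
From mathcomp Require Import all_boot all_order all_algebra.
From mathcomp Require Import all_classical all_reals all_analysis.
From mathcomp Require Import lra.
Set Implicit Arguments. Unset Strict Implicit. Unset Printing Implicit Defensive.
Import Order.TTheory GRing.Theory Num.Theory numFieldNormedType.Exports.
Local Open Scope classical_set_scope.
Local Open Scope ring_scope.

Lemma countableU T (A B : set T) : countable A -> countable B ->
  countable (A `|` B).
Proof.
move=> cA cB; rewrite -bigcup2E; apply: bigcup_countable; first exact: countableP.
by move=> [|[|i]] _ //=; exact: countable0.
Qed.

Section CocountableNbhs.
Variable R : realType.

Lemma subset_itv_center (a d d' : R) : d <= d' ->
  {subset `]a - d, a + d[ <= `]a - d', a + d'[}.
Proof. by move=> dd' x; rewrite !in_itv /= => /andP[? ?]; apply/andP; split; lra. Qed.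

Definition cocountable_nbhs' (a : R) : set_system R :=
  [set P | exists2 d : R, 0 < d &
     countable [set x | [/\ x \in `]a - d, a + d[, x != a & ~ P x]]].

Global Instance cocountable_nbhs'_filter (a : R) : Filter (cocountable_nbhs' a).
Proof.
split; rewrite /cocountable_nbhs' /=.
- exists 1 => //; apply: sub_countable (countable0 R).
  by apply: subset_card_le => x [].
- move=> P Q [d1 d10 c1] [d2 d20 c2]; exists (Num.min d1 d2).
    by rewrite lt_min d10.
  apply: sub_countable (countableU c1 c2); apply: subset_card_le.
  move=> x [xd xa /not_andP[Px|Qx]]; [left|right]; split=> //;
    apply: subset_itv_center xd; rewrite ge_min lexx ?orbT //.
- move=> P Q PQ [d d0 c]; exists d => //; apply: sub_countable c.
  by apply: subset_card_le => x [xd xa Qx]; split=> // /PQ.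
Qed.

Lemma T5limP (B : set R) (f : R -> R) (a L : R) :
  T5lim B f a L <-> f x @[x --> within B (cocountable_nbhs' a)] --> L.
Proof.
have exceptionE eps d : [set x | [/\ x \in `]a - d, a + d[, x != a, B x &
                                     eps <= `|f x - L|]] =
    [set x | [/\ x \in `]a - d, a + d[, x != a & ~ (B x -> `|L - f x| < eps)]].
  apply/seteqP; split=> x /=; rewrite distrC leNgt not_implyE.
    by move=> [xd xa Bx /negP].
  by move=> [xd xa [Bx /negP]].
rewrite cvgrPdist_lt; split=> fL eps /fL[d d0 c]; exists d => //.
  by rewrite -exceptionE.
by rewrite exceptionE.
Qed.
End CocountableNbhs.

Theorem theorem4 (R : realType) (A : set R) (f1 f2 : R -> R)
    (a lambda L1 L2 : R) :
  T5lim A f1 a L1 -> T5lim A f2 a L2 ->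
  [/\ T5lim A (fun x => f1 x + f2 x) a (L1 + L2),
      T5lim A (fun x => f1 x * f2 x) a (L1 * L2),
      (L2 != 0 ->
         T5lim [set x | A x /\ f2 x != 0] (fun x => f1 x / f2 x) a (L1 / L2))
    & T5lim A (fun x => lambda * f1 x) a (lambda * L1)].
Proof.
move=> /T5limP f1L1 /T5limP f2L2; split; rewrite ?T5limP.
- exact: cvgD.
- exact: cvgM.
- move=> L2_neq0.
  have restrict : within [set x | A x /\ f2 x != 0] (cocountable_nbhs' a) `=>`
                  within A (cocountable_nbhs' a).
    by apply: within_subset => x [].
  apply: cvgM; first exact: cvg_trans (cvg_app f1 restrict) f1L1.
  by apply: cvgV => //; exact: cvg_trans (cvg_app f2 restrict) f2L2.
- exact: cvgM (cvg_cst lambda) f1L1.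
Qed.
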